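(* Let $L\subseteq\Sigma^*$ be regular and suppose the finite lattice $\mathrm{LQ}(L)$ has length equal to $|J(\mathrm{LQ}(L))|$ (this holds in particular when $\mathrm{LQ}(L)$ is a boolean algebra or, more generally, a distributive lattice). Then $\mathrm{ns}(L)=\mathrm{nsyn}(L)=|J(\mathrm{LQ}(L))|$, and the canonical residual automaton $N_L$ is a subatomic state-minimal nfa for $L$.
   Context: $\mathrm{LQ}(L)$ is the set of finite unions (including $\emptyset$) of left derivatives $u^{-1}L=\{w:uw\in L\}$, ordered by inclusion. $J(S)$ denotes the join-irreducible elements of a finite lattice $S$ (non-bottom $j$ with $j=\bigvee X\Rightarrow j\in X$). The length of a finite lattice is the maximal $n$ of a chain $s_0<s_1<\cdots<s_n$. The canonical residual automaton $N_L$ is the nfa with states $J(\mathrm{LQ}(L))$, transitions $X\xrightarrow{a}Y$ iff $Y\subseteq a^{-1}X$, initial states those $X\subseteq L$, and final states those $X$ with $\epsilon\in X$. $\mathrm{ns}(L)$ is the least number of states of an nfa (several initial states allowed) accepting $L$. An nfa for $L$ is subatomic if all its states accept languages in the boolean algebra generated by the two-sided derivatives $u^{-1}Lv^{-1}=\{w:uwv\in L\}$; $\mathrm{nsyn}(L)$ is the least number of states of a subatomic nfa for $L$. *)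

From mathcomp Require Import all_boot.
From Stdlib Require List.
Unset Printing Implicit Defensive.

Section Langs.
Variable Sigma : finType.

Definition word := seq Sigma.
Definition lang := word -> bool.

Definition subl (K1 K2 : lang) : Prop := forall w, K1 w -> K2 w.

Definition lder (u : word) (L : lang) : lang := fun w => L (u ++ w).
Definition tder (u v : word) (L : lang) : lang := fun w => L (u ++ w ++ v).

Record dfa := Dfa { dst : finType; dinit : dst; dtrans : dst -> Sigma -> dst; dfin : pred dst }.
Definition dfa_lang (D : dfa) : lang := fun w => dfin D (foldl (dtrans D) (dinit D) w).
Definition regular (L : lang) : Prop := exists D : dfa, dfa_lang D = L.

Record nfa := Nfa { nst : finType; ninit : pred nst; nfin : pred nst;
                    ntrans : nst -> Sigma -> nst -> bool }.

Fixpoint state_lang (A : nfa) (q : nst A) (w : word) {struct w} : bool :=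
  match w with
  | [::] => nfin A q
  | a :: w' => [exists q' : nst A, ntrans A q a q' && state_lang A q' w']
  end.

Definition nfa_lang (A : nfa) : lang := fun w => [exists q : nst A, ninit A q && state_lang A q w].

Inductive bool_gen (G : lang -> Prop) : lang -> Prop :=
| bg_base K : G K -> bool_gen G K
| bg_empty : bool_gen G (fun _ => false)
| bg_compl K : bool_gen G K -> bool_gen G (fun w => ~~ K w)
| bg_union K1 K2 : bool_gen G K1 -> bool_gen G K2 -> bool_gen G (fun w => K1 w || K2 w).

Definition two_sided_ders (L : lang) : lang -> Prop :=
  fun K => exists u v, K = tder u v L.

Definition subatomic (L : lang) (A : nfa) : Prop :=
  forall q : nst A, bool_gen (two_sided_ders L) (state_lang A q).

Definition ns_is (L : lang) (n : nat) : Prop :=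
  (exists A : nfa, nfa_lang A = L /\ #|nst A| = n) /\
  (forall A : nfa, nfa_lang A = L -> n <= #|nst A|).

Definition nsyn_is (L : lang) (n : nat) : Prop :=
  (exists A : nfa, nfa_lang A = L /\ subatomic L A /\ #|nst A| = n) /\
  (forall A : nfa, nfa_lang A = L -> subatomic L A -> n <= #|nst A|).

Definition LQ (L : lang) : lang -> Prop :=
  fun K => exists us : seq word, K = (fun w => has (fun u => lder u L w) us).

Definition is_lub (S : lang -> Prop) (X : lang -> Prop) (j : lang) : Prop :=
  S j /\ (forall x, X x -> subl x j) /\
  (forall k, S k -> (forall x, X x -> subl x k) -> subl j k).

Definition is_bottom (S : lang -> Prop) (b : lang) : Prop :=
  S b /\ forall k, S k -> subl b k.

Definition join_irr (S : lang -> Prop) (j : lang) : Prop :=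
  S j /\ ~ is_bottom S j /\
  forall X : lang -> Prop, (forall x, X x -> S x) -> is_lub S X j -> X j.

Definition chain_of_length (S : lang -> Prop) (s : nat -> lang) (n : nat) : Prop :=
  (forall i, i <= n -> S (s i)) /\
  (forall i, i < n -> subl (s i) (s i.+1) /\ s i <> s i.+1).

Definition lattice_length (S : lang -> Prop) (n : nat) : Prop :=
  (exists s, chain_of_length S s n) /\
  (forall s m, chain_of_length S s m -> m <= n).

Definition card_is (P : lang -> Prop) (n : nat) : Prop :=
  exists l : seq lang, List.NoDup l /\ size l = n /\ forall K, P K <-> List.In K l.

(* A is (a copy of) the canonical residual automaton N_L: its states are in
   bijection, via phi, with J(LQ(L)) and the structure is transported. *)
Definition is_canonical_residual (L : lang) (A : nfa) : Prop :=
  exists phi : nst A -> lang,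
    injective phi /\
    (forall K, join_irr (LQ L) K <-> exists q, phi q = K) /\
    (forall q a q', ntrans A q a q' <-> subl (phi q') (lder [:: a] (phi q))) /\
    (forall q, ninit A q <-> subl (phi q) L) /\
    (forall q, nfin A q <-> phi q [::]).

End Langs.
Arguments subatomic {Sigma}.
Arguments is_canonical_residual {Sigma}.
Arguments nfa_lang {Sigma}.
Arguments nst {Sigma}.
Arguments LQ {Sigma}.
Arguments join_irr {Sigma}.
Arguments ns_is {Sigma}.
Arguments nsyn_is {Sigma}.
Arguments regular {Sigma}.
Arguments lattice_length {Sigma}.
Arguments card_is {Sigma}.

From mathcomp Require Import all_boot.
From Stdlib Require Import Classical ClassicalEpsilon FunctionalExtensionality.

Set Implicit Arguments.
Unset Strict Implicit.

(* For any nfa A accepting L, every residual u^{-1}L is covered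
   by state languages of A contained in it, hence so is every K in LQ(L).  The
   map K |-> {q | L_q ⊆ K} is therefore strictly monotone on LQ(L), so a strict
   chain of length n in LQ(L) forces n <= #states(A).

   For L regular, LQ(L) is closed under arbitrary unions (a DFA
   has finitely many residual state languages), so joins in LQ(L) are unions
   and every K in LQ(L) is the union of the join-irreducibles below it
   (induction on the same strictly monotone measure, taken for a DFA).  This
   makes the state language of every state X of N_L equal to X itself, so N_L
   accepts L, is subatomic (residuals are two-sided derivatives), and has
   |J(LQ(L))| = n states. *)

Definition pbool (P : Prop) : bool := if excluded_middle_informative P then true else false.

Lemma pboolP (P : Prop) : reflect P (pbool P).
Proof. by rewrite /pbool; case: excluded_middle_informative => h; constructor. Qed.

Lemma card_le_of_image (Q1 Q2 : finType) (T : Type) (f1 : Q1 -> T) (f2 : Q2 -> T) :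
  injective f1 -> (forall q1, exists q2, f2 q2 = f1 q1) -> #|Q1| <= #|Q2|.
Proof.
move=> inj1 onto.
have g q1 : {q2 | f2 q2 = f1 q1} by apply: constructive_indefinite_description.
apply: (@leq_card _ _ (fun q => sval (g q))) => a b eab; apply: inj1.
by rewrite -(svalP (g a)) -(svalP (g b)) eab.
Qed.

Lemma size_length (T : Type) (l : seq T) : size l = length l.
Proof. by elim: l => //= x l ->. Qed.

Section Languages.
Variable Sigma : finType.

Lemma lang_ext (K1 K2 : lang Sigma) : subl Sigma K1 K2 -> subl Sigma K2 K1 -> K1 = K2.
Proof.
move=> h12 h21; apply: functional_extensionality => w.
by apply/idP/idP => [/h12|/h21].
Qed.

Lemma strict_subl_witness (x K : lang Sigma) :
  subl Sigma x K -> x <> K -> exists w, K w /\ ~~ x w.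
Proof.
move=> sxK nxK; apply: NNPP => nowit; apply: nxK; apply: lang_ext => // w Kw.
by apply: NNPP => /negP nxw; apply: nowit; exists w.
Qed.

Lemma card_is_enum (P : lang Sigma -> Prop) (n : nat) : card_is P n ->
  exists psi : 'I_n -> lang Sigma, injective psi /\ forall K, P K <-> exists i, psi i = K.
Proof.
case=> l [nodup [sz inP]].
pose psi (i : 'I_n) := List.nth i l (fun _ => false).
have lt_l (i : 'I_n) : (i < length l)%coq_nat by rewrite -size_length sz; apply/ltP.
exists psi; split.
  move=> i j eij; apply: val_inj.
  exact: (proj1 (List.NoDup_nth l (fun _ => false)) nodup i j (lt_l i) (lt_l j) eij).
move=> K; split => [/inP /(List.In_nth _ _ (fun _ => false)) [i [lti <-]]|[i <-]].
  have lti' : i < n by rewrite -sz size_length; apply/ltP.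
  by exists (Ordinal lti').
by apply/inP; apply: List.nth_In.
Qed.

Lemma card_is_card (P : lang Sigma -> Prop) (n : nat) (Q : finType) (phi : Q -> lang Sigma) :
  card_is P n -> injective phi -> (forall K, P K <-> exists q, phi q = K) -> #|Q| = n.
Proof.
move=> /card_is_enum [psi [inj_psi Ppsi]] inj_phi Pphi.
have le_Qn : #|Q| <= #|'I_n|.
  by apply: card_le_of_image inj_phi _ => q; apply/Ppsi/Pphi; exists q.
have le_nQ : #|'I_n| <= #|Q|.
  by apply: card_le_of_image inj_psi _ => i; apply/Pphi/Ppsi; exists i.
by apply/eqP; rewrite eqn_leq -(card_ord n) le_Qn le_nQ.
Qed.

Section Residuals.
Variable L : lang Sigma.

Lemma LQ_empty : LQ L (fun _ => false).
Proof. by exists [::]. Qed.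

Lemma LQ_lang : LQ L L.
Proof. by exists [:: [::]]; apply: functional_extensionality => w /=; rewrite orbF. Qed.

Lemma LQ_residual (u : word Sigma) : LQ L (lder Sigma u L).
Proof. by exists [:: u]; apply: functional_extensionality => w /=; rewrite orbF. Qed.

Lemma LQ_lder (K : lang Sigma) (a : Sigma) : LQ L K -> LQ L (lder Sigma [:: a] K).
Proof.
case=> us ->; exists (map (fun u => rcons u a) us).
apply: functional_extensionality => w; rewrite /lder has_map.
by apply: eq_has => u /=; rewrite cat_rcons.
Qed.

Lemma LQ_has (T : eqType) (s : seq T) (g : T -> lang Sigma) :
  (forall t, t \in s -> LQ L (g t)) -> LQ L (fun w => has (fun t => g t w) s).
Proof.
elim: s => [|t s IH] LQg; first exact: LQ_empty.
have [us eus] := LQg t (mem_head t s).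
have [vs evs] := IH (fun t' ts => LQg t' (mem_behead (s := t :: s) ts)).
exists (us ++ vs); apply: functional_extensionality => w.
by rewrite has_cat /= -(congr1 (fun K => K w) eus) -(congr1 (fun K => K w) evs).
Qed.

Lemma LQ_bool_gen (K : lang Sigma) : LQ L K -> bool_gen Sigma (two_sided_ders Sigma L) K.
Proof.
case=> us ->; elim: us => [|u us IH]; first exact: bg_empty.
apply: (bg_union _ _ (lder Sigma u L)) => //; apply: bg_base.
by exists u, [::]; apply: functional_extensionality => w; rewrite /tder /lder cats0.
Qed.

Section Covering.
Variable Q : finType.
Variable f : Q -> lang Sigma.
Hypothesis covers_residuals : forall u w, lder Sigma u L w ->
  exists q, subl Sigma (f q) (lder Sigma u L) /\ f q w.

Lemma covers_LQ (K : lang Sigma) : LQ L K -> forall w, K w ->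
  exists q, subl Sigma (f q) K /\ f q w.
Proof.
case=> us -> w /hasP [u uus uw].
have [q [fq_sub fqw]] := covers_residuals uw.
by exists q; split => // v /fq_sub uv; apply/hasP; exists u.
Qed.

Definition support (K : lang Sigma) : {set Q} := [set q | pbool (subl Sigma (f q) K)].

Lemma support_proper (x K : lang Sigma) :
  LQ L K -> subl Sigma x K -> x <> K -> support x \proper support K.
Proof.
move=> LQK sxK nxK; apply/properP; split.
  apply/subsetP => q; rewrite !inE => /pboolP fx; apply/pboolP => v /fx; exact: sxK.
have [w [Kw nxw]] := strict_subl_witness sxK nxK.
have [q [fqK fqw]] := covers_LQ LQK Kw.
exists q; rewrite !inE; first exact/pboolP.
by apply/pboolP => fqx; move: (fqx _ fqw); rewrite (negbTE nxw).
Qed.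

Lemma chain_length_le_card (s : nat -> lang Sigma) (m : nat) :
  chain_of_length Sigma (LQ L) s m -> m <= #|Q|.
Proof.
case=> chainLQ chain_lt.
have grow i : i <= m -> i <= #|support (s i)|.
  elim: i => // i IH lt_im; have [sub neq] := chain_lt i lt_im.
  have := proper_card (support_proper (chainLQ _ lt_im) sub neq).
  exact: leq_ltn_trans (IH (ltnW lt_im)).
exact: leq_trans (grow m (leqnn m)) (max_card _).
Qed.
End Covering.

Section NfaRuns.
Variable A : nfa Sigma.

Fixpoint runs (q : nst A) (u : word Sigma) (q' : nst A) : bool :=
  match u with
  | [::] => q == q'
  | a :: u' => [exists q1, ntrans Sigma A q a q1 && runs q1 u' q']
  end.

Lemma state_lang_cat (q : nst A) (u w : word Sigma) :
  state_lang Sigma A q (u ++ w) = [exists q', runs q u q' && state_lang Sigma A q' w].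
Proof.
elim: u q => [|a u IH] q /=.
  apply/idP/existsP => [qw|[q' /andP [/eqP <- //]]]; by exists q; rewrite eqxx.
apply/existsP/existsP => [[q1 /andP [t1 q1w]]|[q' /andP [/existsP [q1 /andP [t1 r]] q'w]]].
  move: q1w; rewrite IH => /existsP [q' /andP [r q'w]].
  by exists q'; rewrite q'w andbT; apply/existsP; exists q1; rewrite t1 r.
by exists q1; rewrite t1 IH; apply/existsP; exists q'; rewrite r q'w.
Qed.

(* The states reached by u cover the residual u^{-1}L. *)
Lemma nfa_covers_residuals : nfa_lang A = L -> forall u w, lder Sigma u L w ->
  exists q, subl Sigma (state_lang Sigma A q) (lder Sigma u L) /\ state_lang Sigma A q w.
Proof.
move=> <- u w /existsP [q0 /andP [q0init]]; rewrite state_lang_cat.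
case/existsP=> q /andP [run qw]; exists q; split => // v qv.
by apply/existsP; exists q0; rewrite q0init state_lang_cat; apply/existsP; exists q; rewrite run qv.
Qed.
End NfaRuns.

Lemma nfa_size_ge_chain (A : nfa Sigma) (s : nat -> lang Sigma) (n : nat) :
  nfa_lang A = L -> chain_of_length Sigma (LQ L) s n -> n <= #|nst A|.
Proof. by move=> accL; apply: (chain_length_le_card (nfa_covers_residuals accL)). Qed.

Definition bigcup (X : lang Sigma -> Prop) : lang Sigma :=
  fun w => pbool (exists x, X x /\ x w).

Section Regular.
Variable D : dfa Sigma.
Hypothesis D_accepts : dfa_lang Sigma D = L.

Definition dfa_state_lang (q : dst Sigma D) : lang Sigma :=
  fun w => dfin Sigma D (foldl (dtrans Sigma D) q w).

Definition dfa_reach (u : word Sigma) : dst Sigma D := foldl (dtrans Sigma D) (dinit Sigma D) u.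

Lemma residual_dfa_state (u : word Sigma) : lder Sigma u L = dfa_state_lang (dfa_reach u).
Proof.
apply: functional_extensionality => w.
by rewrite -D_accepts /dfa_lang /lder /dfa_state_lang /dfa_reach foldl_cat.
Qed.

Lemma dfa_covers_residuals u w : lder Sigma u L w ->
  exists q, subl Sigma (dfa_state_lang q) (lder Sigma u L) /\ dfa_state_lang q w.
Proof. by rewrite residual_dfa_state => uw; exists (dfa_reach u); split. Qed.

(* LQ(L) is closed under arbitrary unions: a union of residuals is the union of
   the finitely many reachable DFA states whose languages it contains. *)
Lemma LQ_bigcup (X : lang Sigma -> Prop) : (forall x, X x -> LQ L x) -> LQ L (bigcup X).
Proof.
move=> XLQ.
pose T := [set q | pbool (exists u, q = dfa_reach u /\
                          exists x, X x /\ subl Sigma (dfa_state_lang q) x)].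
have -> : bigcup X = fun w => has (fun q => dfa_state_lang q w) (enum T).
  apply: functional_extensionality => w; apply/pboolP/hasP.
    case=> x [Xx xw]; have [us ex] := XLQ x Xx.
    move: (xw); rewrite ex => /hasP [u uus uw].
    exists (dfa_reach u); last by rewrite -residual_dfa_state.
    rewrite mem_enum inE; apply/pboolP; exists u; split => //; exists x; split => //.
    by rewrite -residual_dfa_state ex => v uv; apply/hasP; exists u.
  case=> q; rewrite mem_enum inE => /pboolP [u [_ [x [Xx qx]]]] qw.
  by exists x; split => //; apply: qx.
apply: LQ_has => q; rewrite mem_enum inE => /pboolP [u [-> _]].
by rewrite -residual_dfa_state; apply: LQ_residual.
Qed.

Lemma lub_is_bigcup (X : lang Sigma -> Prop) (K : lang Sigma) :
  (forall x, X x -> LQ L x) -> is_lub Sigma (LQ L) X K -> K = bigcup X.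
Proof.
move=> XLQ [_ [Kub Kleast]]; apply: lang_ext.
  by apply: Kleast (LQ_bigcup XLQ) _ => x Xx w xw; apply/pboolP; exists x.
by move=> w /pboolP [x [Xx xw]]; apply: Kub xw.
Qed.

Lemma not_join_irr_split (K : lang Sigma) (w : word Sigma) :
  LQ L K -> ~ join_irr (LQ L) K -> K w ->
  exists x, LQ L x /\ subl Sigma x K /\ x <> K /\ x w.
Proof.
move=> LQK notJ Kw.
have notbot : ~ is_bottom Sigma (LQ L) K by case=> _ /(_ _ LQ_empty w Kw).
have [X [XLQ [lubK notXK]]] :
    exists X, (forall x, X x -> LQ L x) /\ is_lub Sigma (LQ L) X K /\ ~ X K.
  apply: NNPP => noX; apply: notJ; split; [done|split; [done|]] => X XLQ lubK.
  by apply: NNPP => notXK; apply: noX; exists X.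
have /pboolP [x [Xx xw]] : bigcup X w by rewrite -(lub_is_bigcup XLQ lubK).
have [_ [Kub _]] := lubK.
exists x; split; [exact: XLQ Xx|split; [exact: Kub Xx|split => // exK]].
by apply: notXK; rewrite -exK.
Qed.

Lemma join_irr_cover (K : lang Sigma) : LQ L K -> forall w, K w ->
  exists j, join_irr (LQ L) j /\ subl Sigma j K /\ j w.
Proof.
have [m] := ubnP #|support dfa_state_lang K|; elim: m K => [|m IH] K; first by rewrite ltn0.
move=> ltKm LQK w Kw.
case: (classic (join_irr (LQ L) K)) => [JK|notJK]; first by exists K; split; [|split=> // v].
have [x [LQx [xK [neq xw]]]] := not_join_irr_split LQK notJK Kw.
have ltx := proper_card (support_proper dfa_covers_residuals LQK xK neq).
have [j [Jj [jx jw]]] := IH x (leq_trans ltx ltKm) LQx w xw.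
by exists j; split => //; split => // v /jx; apply: xK.
Qed.

Section Canonical.
Variable A : nfa Sigma.
Variable phi : nst A -> lang Sigma.
Hypothesis phi_J : forall K, join_irr (LQ L) K <-> exists q, phi q = K.
Hypothesis phi_trans : forall q a q',
  ntrans Sigma A q a q' <-> subl Sigma (phi q') (lder Sigma [:: a] (phi q)).
Hypothesis phi_init : forall q, ninit Sigma A q <-> subl Sigma (phi q) L.
Hypothesis phi_fin : forall q, nfin Sigma A q <-> phi q [::].

Lemma LQ_phi (q : nst A) : LQ L (phi q).
Proof. by have [_ /(_ (ex_intro _ q erefl)) []] := phi_J (phi q). Qed.

Lemma canonical_state_lang (q : nst A) : state_lang Sigma A q = phi q.
Proof.
apply: functional_extensionality => w; elim: w q => [|a w IH] q /=.
  by apply/idP/idP => /phi_fin.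
apply/existsP/idP => [[q' /andP [/phi_trans q'sub]]|aw].
  by rewrite IH; apply: q'sub.
have [j [Jj [ja jw]]] := join_irr_cover (LQ_lder a (LQ_phi q)) aw.
have [q' ej] := proj1 (phi_J j) Jj; subst j.
by exists q'; rewrite IH jw andbT; apply/phi_trans.
Qed.

Lemma canonical_accepts : nfa_lang A = L.
Proof.
apply: functional_extensionality => w.
apply/existsP/idP => [[q /andP [/phi_init qL]]|Lw].
  by rewrite canonical_state_lang; apply: qL.
have [j [Jj [jL jw]]] := join_irr_cover LQ_lang Lw.
have [q ej] := proj1 (phi_J j) Jj; subst j.
by exists q; rewrite canonical_state_lang jw andbT; apply/phi_init.
Qed.

Lemma canonical_subatomic : subatomic L A.
Proof. by move=> q; rewrite canonical_state_lang; apply/LQ_bool_gen/LQ_phi. Qed.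
End Canonical.
End Regular.

Lemma canonical_residual_exists (n : nat) :
  card_is (join_irr (LQ L)) n -> exists A : nfa Sigma, is_canonical_residual L A.
Proof.
move=> /card_is_enum [psi [inj_psi psiJ]].
exists (Nfa Sigma (ordinal n) (fun i => pbool (subl Sigma (psi i) L)) (fun i => psi i [::])
          (fun i a j => pbool (subl Sigma (psi j) (lder Sigma [:: a] (psi i))))).
exists psi; do 2!split => //.
split; first by move=> i a j /=; split => /pboolP.
by split => // i /=; split => /pboolP.
Qed.

Lemma canonical_residual_spec (n : nat) (A : nfa Sigma) :
  regular L -> card_is (join_irr (LQ L)) n -> is_canonical_residual L A ->
  nfa_lang A = L /\ subatomic L A /\ #|nst A| = n.
Proof.
move=> [D D_accepts] cardJ [phi [inj_phi [phi_J [phi_trans [phi_init phi_fin]]]]].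
split; first exact: (canonical_accepts D_accepts phi_J phi_trans phi_init phi_fin).
split; first exact: (canonical_subatomic D_accepts phi_J phi_trans phi_fin).
exact: card_is_card cardJ inj_phi phi_J.
Qed.
End Residuals.
End Languages.

Theorem mainTheorem18 (Sigma : finType) (L : lang Sigma) (n : nat) :
  regular L ->
  lattice_length (LQ L) n ->
  card_is (join_irr (LQ L)) n ->
  ns_is L n /\ nsyn_is L n /\
  (exists A : nfa Sigma, is_canonical_residual L A) /\
  (forall A : nfa Sigma, is_canonical_residual L A ->
     nfa_lang A = L /\ subatomic L A /\ #|nst A| = n).
Proof.
move=> regL [[s chain] _] cardJ.
have lower (A : nfa Sigma) : nfa_lang A = L -> n <= #|nst A|.
  by move=> accL; apply: nfa_size_ge_chain accL chain.
have [NL NL_canon] := canonical_residual_exists cardJ.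
have [NL_accepts [NL_subatomic NL_size]] := canonical_residual_spec regL cardJ NL_canon.
split; first by split; [exists NL | exact: lower].
split; first by split; [exists NL | move=> A accL _; exact: lower].
split; first by exists NL.
by move=> A; apply: canonical_residual_spec.
Qed.
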